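(* Let $1\le r\le m\le n$, $k\ge1$, and let $P$ be a prime ideal of $S$ minimal over $\mathcal I^{m,n}_{r,k}$. Then for any two index pairs $(i,j)$ and $(i',j')$ with $1\le i,i'\le m$, $1\le j,j'\le n$, we have $x^{(0)}_{i,j}\in P$ if and only if $x^{(0)}_{i',j'}\in P$.
   Context: Let $F$ be an algebraically closed field. For integers $1\le r\le m\le n$ and $k\ge 1$, let $S=F[x^{(l)}_{i,j}:1\le i\le m,\ 1\le j\le n,\ 0\le l\le k-1]$, the coordinate ring of $\mathbf A^{mnk}_F$, and let $X(t)$ be the $m\times n$ matrix over $S[t]/(t^k)$ with $(i,j)$ entry $x_{i,j}(t)=\sum_{l=0}^{k-1}x^{(l)}_{i,j}t^l$. Every element of $S[t]/(t^k)$ is uniquely $\sum_{l=0}^{k-1}c_lt^l$ with $c_l\in S$ (its coefficient of $t^l$). $\mathcal I^{m,n}_{r,k}\subseteq S$ is the ideal generated by the coefficients of $t^l$, $0\le l\le k-1$, of all $r\times r$ minors of $X(t)$, and $\mathcal Z^{m,n}_{r,k}\subseteq\mathbf A^{mnk}_F$ is its zero set. *)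

From HB Require Import structures.
From mathcomp Require Import all_boot all_order all_algebra.
From mathcomp Require Import mpoly.
Set Implicit Arguments. Unset Strict Implicit. Unset Printing Implicit Defensive.
Import Order.TTheory GRing.Theory.
Local Open Scope ring_scope.

(* Index type of the variables x^{(l)}_{i,j}: triples (i,j,l). *)
Notation vidx m n k := ('I_m * 'I_n * 'I_k)%type.

(* S = F[x^{(l)}_{i,j}], the polynomial ring in m*n*k variables, whose
   variables are enumerated by enum_rank over the finite index type. *)
Notation Sring F m n k := {mpoly F[#|{: vidx m n k}|]}.

Definition xvar (F : closedFieldType) (m n k : nat)
  (i : 'I_m) (j : 'I_n) (l : 'I_k) : Sring F m n k :=
  'X_(enum_rank ((i, j, l) : vidx m n k)).

Definition xpoly (F : closedFieldType) (m n k : nat) (i : 'I_m) (j : 'I_n)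
  : {poly Sring F m n k} :=
  \sum_(l < k) (xvar F i j l)%:P * 'X^l.

Definition Xt (F : closedFieldType) (m n k : nat) : 'M[{poly Sring F m n k}]_(m, n) :=
  \matrix_(i, j) xpoly F k i j.

(* The r x r minor of X(t) with rows f(0)<...<f(r-1), columns g(0)<...<g(r-1),
   computed in S[t]; its coefficients of t^l for l < k are exactly the
   coefficients of the minor computed in S[t]/(t^k) (truncation is a ring map). *)
Definition minorXt (F : closedFieldType) (m n k r : nat)
  (f : 'I_r -> 'I_m) (g : 'I_r -> 'I_n) : {poly Sring F m n k} :=
  \det (\matrix_(a, b) Xt F m n k (f a) (g b)).

Definition strictly_incr (r p : nat) (f : 'I_r -> 'I_p) : Prop :=
  forall a b : 'I_r, (a < b)%N -> (f a < f b)%N.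

Definition Igens (F : closedFieldType) (m n r k : nat) (p : Sring F m n k) : Prop :=
  exists (f : 'I_r -> 'I_m) (g : 'I_r -> 'I_n) (l : nat),
    [/\ strictly_incr f, strictly_incr g, (l < k)%N & p = (minorXt F k f g)`_l].

Definition ideal_gen (R : comRingType) (G : R -> Prop) (p : R) : Prop :=
  exists s : seq (R * R), (forall q, q \in s -> G q.2) /\ p = \sum_(q <- s) q.1 * q.2.

Definition Iideal (F : closedFieldType) (m n r k : nat) : Sring F m n k -> Prop :=
  ideal_gen (@Igens F m n r k).

Definition is_ideal (R : comRingType) (P : R -> Prop) : Prop :=
  [/\ P 0, (forall a b, P a -> P b -> P (a + b)) & (forall a b, P b -> P (a * b))].

Definition is_prime_ideal (R : comRingType) (P : R -> Prop) : Prop :=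
  [/\ is_ideal P, ~ P 1 & (forall a b, P (a * b) -> P a \/ P b)].

Definition subset_pred (R : Type) (A B : R -> Prop) : Prop := forall x, A x -> B x.

Definition minimal_prime_over (R : comRingType) (I P : R -> Prop) : Prop :=
  [/\ is_prime_ideal P, subset_pred I P &
      forall Q : R -> Prop, is_prime_ideal Q -> subset_pred I Q ->
        subset_pred Q P -> subset_pred P Q].

From mathcomp Require Import all_boot all_order all_algebra.
From mathcomp Require Import mpoly ring fingroup perm.
From mathcomp Require classical_sets.
From Stdlib Require Import Classical.
Set Implicit Arguments. Unset Strict Implicit. Unset Printing Implicit Defensive.
Import GRing.Theory.
Local Open Scope ring_scope.

(* Adding [c] times row [i0] (or column [j0]) of X(t) to row [i1] (column [j1]) is a
   substitution of the variables x^(l) that maps the ideal I to itself. Let P be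
   minimal over I and x = x^(l)_{i1,j}, y = x^(l)_{i0,j}. Minimality gives s outside
   P with s x^N in I; applying the substitution, s_c (x + c y)^N lies in I for every
   c. If x were in P but y not, s_c would lie in P for all c <> 0; as s_c depends
   polynomially on c and F is infinite, s_0 = s lies in P as well, a contradiction.
   Row and column moves then connect any two entries. *)

Section Ideals.
Variable R : comNzRingType.
Implicit Types (J P Q : R -> Prop) (a x y : R).

Lemma ideal_sum J (I : eqType) (s : seq I) (G : I -> R) :
  is_ideal J -> (forall i, i \in s -> J (G i)) -> J (\sum_(i <- s) G i).
Proof.
move=> [J0 JD _]; elim: s => [|i s IHs] Gs; first by rewrite big_nil.
rewrite big_cons; apply: JD; first by apply: Gs; rewrite mem_head.
by apply: IHs => i' si'; apply: Gs; rewrite inE si' orbT.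
Qed.

Lemma ideal_gen_ideal (G : R -> Prop) : is_ideal (ideal_gen G).
Proof.
split.
- by exists [::]; rewrite big_nil.
- move=> a b [s1 [G1 ->]] [s2 [G2 ->]]; exists (s1 ++ s2); rewrite big_cat.
  by split=> // q; rewrite mem_cat => /orP [/G1|/G2].
- move=> a b [s [Gs ->]]; exists [seq (a * q.1, q.2) | q <- s]; split.
    by move=> q /mapP [q' /Gs Gq' ->].
  by rewrite big_map big_distrr; apply: eq_bigr => q _ /=; rewrite mulrA.
Qed.

Lemma ideal_gen_sub (G : R -> Prop) x : G x -> ideal_gen G x.
Proof.
by move=> Gx; exists [:: (1, x)]; rewrite big_seq1 mul1r; split=> // q /[!inE] /eqP ->.
Qed.

Lemma ideal_gen_rmorph (G : R -> Prop) (phi : {rmorphism R -> R}) :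
  (forall x, G x -> ideal_gen G (phi x)) -> forall x, ideal_gen G x -> ideal_gen G (phi x).
Proof.
move=> phiG _ [s [Gs ->]]; rewrite rmorph_sum; apply: ideal_sum; first exact: ideal_gen_ideal.
move=> q /Gs /phiG Gq; rewrite rmorphM.
by case: (ideal_gen_ideal G) => _ _; apply.
Qed.

Lemma prime_idealMXn P x y N : is_prime_ideal P -> P (x * y ^+ N) -> P x \/ P y.
Proof.
move=> [_ _ Pprime]; elim: N x => [|N IHN] x; first by rewrite expr0 mulr1; left.
by rewrite exprS mulrCA => /Pprime [|/IHN []]; auto.
Qed.

Definition ideal_adjoin P x (y : R) := exists q c, P q /\ y = q + c * x.

Lemma ideal_adjoin_ideal P x : is_ideal P -> is_ideal (ideal_adjoin P x).
Proof.
move=> [P0 PD PM]; split.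
- by exists 0, 0; rewrite mul0r addr0.
- move=> _ _ [q [c [Pq ->]]] [q' [c' [Pq' ->]]].
  by exists (q + q'), (c + c'); split; [exact: PD | ring].
- move=> a _ [q [c [Pq ->]]].
  by exists (a * q), (a * c); split; [exact: PM | ring].
Qed.

Section PrimeAvoidance.
Variables (J T : R -> Prop).
Hypotheses (J_ideal : is_ideal J) (T1 : T 1) (TM : forall x y, T x -> T y -> T (x * y)).

Definition avoids Q := [/\ is_ideal Q, subset_pred J Q & forall x, Q x -> ~ T x].

(* Chains are taken in the family of sets [A] with [A \/ J] avoiding, so that the
   empty chain, whose union is empty, is admissible for [Zorn_bigcup]. *)
Lemma exists_maximal_avoiding : avoids J ->
  exists Q, avoids Q /\ forall Q', avoids Q' -> subset_pred Q Q' -> subset_pred Q' Q.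
Proof.
move=> JT; pose fam (A : R -> Prop) := avoids (fun x => A x \/ J x).
have chainP (C : (R -> Prop) -> Prop) : (forall A, C A -> fam A) ->
    classical_sets.total_on C (@classical_sets.subset R) ->
    fam (classical_sets.bigcup C id).
  move=> Cfam Ctot; have [J0 JD JM] := J_ideal.
  have inU A x : C A -> A x \/ J x -> classical_sets.bigcup C id x \/ J x.
    by move=> CA [Ax|Jx]; [left; exists A|right].
  split; [split| |].
  - by right.
  - move=> x y [[A CA Ax]|Jx] [[B CB By]|Jy]; last by right; exact: JD.
    + have [AB|BA] := Ctot _ _ CA CB.
        have [[_ BD _] _ _] := Cfam _ CB.
        exact: inU CB (BD _ _ (or_introl (AB _ Ax)) (or_introl By)).
      have [[_ AD _] _ _] := Cfam _ CA.
      exact: inU CA (AD _ _ (or_introl Ax) (or_introl (BA _ By))).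
    + have [[_ AD _] _ _] := Cfam _ CA; exact: inU CA (AD _ _ (or_introl Ax) (or_intror Jy)).
    + have [[_ BD _] _ _] := Cfam _ CB; exact: inU CB (BD _ _ (or_intror Jx) (or_introl By)).
  - move=> a y [[B CB By]|Jy]; last by right; exact: JM.
    by have [[_ _ BM] _ _] := Cfam _ CB; exact: inU CB (BM _ _ (or_introl By)).
  - by move=> x Jx; right.
  - move=> x [[A CA Ax]|Jx]; last by case: JT => _ _; apply.
    by have [_ _ AT] := Cfam _ CA; apply: AT; left.
have [A [famA Amax]] := classical_sets.Zorn_bigcup chainP.
exists (fun x => A x \/ J x); split=> // Q' Q'T AQ' x Q'x; apply: NNPP => nAx.
have JQ' y : Q' y \/ J y -> Q' y by case: Q'T => _ JQ' _ [//|/JQ'].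
apply: (Amax Q'); last first.
  have [[Q'0 Q'D Q'M] _ Q'T'] := Q'T; split; [split| |].
  - by left.
  - by move=> a b /JQ' Q'a /JQ' Q'b; left; apply: Q'D.
  - by move=> a b /JQ' Q'b; left; apply: Q'M.
  - by move=> y; right.
  - by move=> y /JQ'; apply: Q'T'.
split; first by move=> y Ay; apply: AQ'; left.
by move=> Q'A; apply: nAx; left; apply: Q'A.
Qed.

Lemma exists_prime_avoiding :
  avoids J -> exists Q, is_prime_ideal Q /\ avoids Q.
Proof.
move=> JT; have [Q [QT Qmax]] := exists_maximal_avoiding JT.
have [[Q0 QD QM] JQ QnT] := QT.
have meetT x : ~ Q x -> exists q c, Q q /\ T (q + c * x).
  move=> nQx; apply: NNPP => noT; apply: nQx.
  apply: (Qmax (ideal_adjoin Q x)); last by exists 0, 1; rewrite add0r mul1r.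
  - split; first exact: ideal_adjoin_ideal.
      by move=> y /JQ Qy; exists y, 0; rewrite mul0r addr0.
    by move=> _ [q [c [Qq ->]]] Tqc; apply: noT; exists q, c.
  - by move=> y Qy; exists y, 0; rewrite mul0r addr0.
exists Q; split=> //; split=> [//||x y Qxy]; first by move/QnT.
apply: NNPP => /not_or_and [/meetT [q1 [c1 [Qq1 T1x]]] /meetT [q2 [c2 [Qq2 T2y]]]].
apply: (QnT _ _ (TM T1x T2y)).
have -> : (q1 + c1 * x) * (q2 + c2 * y) =
    (q1 + c1 * x) * q2 + (c1 * c2) * (x * y) + (c2 * y) * q1 by ring.
by apply: (QD); [apply: (QD)|]; apply: (QM).
Qed.

End PrimeAvoidance.

(* Otherwise the multiplicative set {s a^N | s \notin P} avoids J, and a prime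
   containing J and avoiding it would lie strictly inside P. *)
Lemma minimal_prime_nilpotent J P a : is_ideal J -> minimal_prime_over J P ->
  P a -> exists s N, ~ P s /\ J (s * a ^+ N).
Proof.
move=> J_ideal [P_prime JP Pmin] Pa; apply: NNPP => noJ.
have [[P0 _ _] P1 Pprime] := P_prime.
pose T x := exists s N, ~ P s /\ x = s * a ^+ N.
have T1 : T 1 by exists 1, 0%N; rewrite mulr1.
have TM x y : T x -> T y -> T (x * y).
  move=> [s [N [nPs ->]]] [s' [N' [nPs' ->]]]; exists (s * s'), (N + N')%N; split.
    by move/Pprime => [].
  by rewrite exprD; ring.
have JT : avoids J T J.
  by split=> // x Jx [s [N [nPs e]]]; apply: noJ; exists s, N; rewrite -e.
have [Q [Q_prime [_ JQ QT]]] := exists_prime_avoiding J_ideal T1 TM JT.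
have QP : subset_pred Q P.
  by move=> x Qx; apply: NNPP => nPx; apply: (QT x Qx); exists x, 0%N; rewrite mulr1.
by apply: (QT a (Pmin Q Q_prime JQ QP a Pa)); exists 1, 1%N; rewrite mul1r expr1.
Qed.

End Ideals.

(* The coefficient vector of [q] is recovered from its values at the [cs] by inverting
   a Vandermonde matrix, whose determinant is the product of the differences. *)
Lemma ideal_coef_of_evals (R : comUnitRingType) (J : R -> Prop) (q : {poly R}) (cs : seq R) :
  is_ideal J -> uniq cs -> size cs = size q ->
  (forall a b, a \in cs -> b \in cs -> a != b -> a - b \is a GRing.unit) ->
  (forall c, c \in cs -> J q.[c]) -> forall i, J q`_i.
Proof.
move=> J_ideal ucs szcs csU Jq i; have [J0 _ JM] := J_ideal.
have [iq|qi] := ltnP i (size q); last by rewrite nth_default.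
pose V := Vandermonde (size q) (\row_(j < size q) cs`_j).
pose t : 'rV[R]_(size q) := \row_j q`_j.
have tV j : (t *m V) 0 j = q.[cs`_j].
  by rewrite !mxE horner_coef; apply: eq_bigr => l _; rewrite !mxE.
have V_unit : V \in unitmx.
  rewrite unitmxE det_Vandermonde; apply: unitr_prod => a _; apply: unitr_prod => b ab.
  rewrite !mxE; apply: csU; rewrite ?mem_nth ?szcs //.
  by rewrite nth_uniq ?szcs // eq_sym neq_ltn ab.
have -> : q`_i = t 0 (Ordinal iq) by rewrite mxE.
rewrite -(mulmxK V_unit t) mxE; apply: ideal_sum => // j _.
by rewrite mulrC tV; apply: JM; apply: Jq; rewrite mem_nth ?szcs.
Qed.

Lemma closed_field_fresh (F : closedFieldType) (s : seq F) : exists c, c \notin s.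
Proof.
have /closed_nonrootP [c] : \prod_(a <- s) ('X - a%:P) != 0.
  by rewrite prodf_seq_neq0; apply/allP => a _; rewrite polyXsubC_eq0.
rewrite /root horner_prod => nroot; exists c; apply: contraNN nroot => cs.
by rewrite (big_rem c cs) /= hornerXsubC subrr mul0r.
Qed.

Lemma closed_field_uniq_seq (F : closedFieldType) E :
  exists cs : seq F, uniq (0 :: cs) /\ size cs = E.
Proof.
elim: E => [|E [cs [ucs szcs]]]; first by exists [::].
have [c c_fresh] := closed_field_fresh (0 :: cs).
exists (c :: cs); split; rewrite /= ?szcs //.
move: c_fresh ucs; rewrite !inE /= negb_or => /andP [c0 ccs] /andP [zcs ->].
by rewrite eq_sym (negPf c0) zcs ccs.
Qed.

Section Minors.
Variable R : comNzRingType.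

Lemma det_mxsub_noninjl p q r (A : 'M[R]_(p, q)) (f : 'I_r -> 'I_p) g :
  ~ injective f -> \det (mxsub f g A) = 0.
Proof.
move/injectiveP/injectivePn => [a [b ab fab]].
by apply: (determinant_alternate ab) => j; rewrite !mxE fab.
Qed.

Lemma det_mxsub_noninjr p q r (A : 'M[R]_(p, q)) f (g : 'I_r -> 'I_q) :
  ~ injective g -> \det (mxsub f g A) = 0.
Proof. by move=> ninj_g; rewrite -det_tr trmx_mxsub det_mxsub_noninjl. Qed.

Lemma mul_delta_mxE p q (i1 i0 : 'I_p) (A : 'M[R]_(p, q)) i j :
  (delta_mx i1 i0 *m A) i j = (i == i1)%:R * A i0 j.
Proof.
rewrite mxE (bigD1 i0) //= big1 => [|k /negPf k_i0]; last by rewrite mxE k_i0 andbF mul0r.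
by rewrite mxE eqxx andbT addr0.
Qed.

Lemma add_row_mxE p q (A : 'M[R]_(p, q)) i0 i1 c i j :
  (A + c *: (delta_mx i1 i0 *m A)) i j = A i j + (if i == i1 then c * A i0 j else 0).
Proof.
by rewrite mxE [in LHS]mxE mul_delta_mxE; case: (i == i1); rewrite /= ?mul1r ?mul0r ?mulr0.
Qed.

Lemma add_col_mxE p q (A : 'M[R]_(p, q)) j0 j1 c i j :
  (A + c *: (A *m delta_mx j0 j1)) i j = A i j + (if j == j1 then c * A i j0 else 0).
Proof.
have -> : (A + c *: (A *m delta_mx j0 j1)) i j = (A + c *: (A *m delta_mx j0 j1))^T j i.
  by rewrite [RHS]mxE.
by rewrite linearD linearZ /= trmx_mul trmx_delta add_row_mxE !mxE.
Qed.

Lemma minors_add_row (J : R -> Prop) p q r (A : 'M[R]_(p, q)) i0 i1 c :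
  is_ideal J -> (forall (f : 'I_r -> 'I_p) g, J (\det (mxsub f g A))) ->
  forall (f : 'I_r -> 'I_p) g, J (\det (mxsub f g (A + c *: (delta_mx i1 i0 *m A)))).
Proof.
move=> [J0 JD JM] JA f g.
have A'E := add_row_mxE A i0 i1 c; set A' := A + _ in A'E *; clearbody A'.
have [f_inj|/det_mxsub_noninjl ->] := classic (injective f); last exact: J0.
have [a /eqP fa|no_i1] := pickP (fun a => f a == i1); last first.
  have -> : mxsub f g A' = mxsub f g A.
    by apply/matrixP => a b; rewrite !mxE A'E no_i1 addr0.
  exact: JA.
(* Row [a] is the only one of the minor that changes, and it changes linearly. *)
have other_rows x : f (lift a x) == i1 = false.
  by apply/negbTE; rewrite -fa (inj_eq f_inj) eq_sym neq_lift.
pose f' x := if x == a then i0 else f x.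
rewrite (@determinant_multilinear _ _ _ (mxsub f g A) (mxsub f' g A) a 1 c).
- by rewrite mul1r; apply: JD; [apply: JA | apply: JM; apply: JA].
- by apply/rowP => j; rewrite !mxE A'E fa /f' !eqxx mul1r.
- by apply/matrixP => x j; rewrite !mxE A'E other_rows addr0.
- apply/matrixP => x j; rewrite !mxE A'E other_rows addr0.
  by rewrite /f' eq_sym (negPf (neq_lift a x)).
Qed.

Lemma minors_add_col (J : R -> Prop) p q r (A : 'M[R]_(p, q)) j0 j1 c :
  is_ideal J -> (forall (f : 'I_r -> 'I_p) g, J (\det (mxsub f g A))) ->
  forall (f : 'I_r -> 'I_p) g, J (\det (mxsub f g (A + c *: (A *m delta_mx j0 j1)))).
Proof.
move=> J_ideal JA f g.
rewrite -det_tr trmx_mxsub linearD /= linearZ /= trmx_mul trmx_delta.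
apply: minors_add_row => // f' g'.
by rewrite -trmx_mxsub det_tr.
Qed.

Lemma det_mxsub_perm q (A : 'M[R]_q) (s s' : {perm 'I_q}) :
  \det (mxsub s s' A) = \det (perm_mx s) * \det A * \det (perm_mx s'^-1).
Proof.
rewrite -!det_mulmx -row_permE -col_permE; congr (\det _).
by apply/matrixP => a b; rewrite !mxE.
Qed.

End Minors.

Lemma injective_sorted r p (f : 'I_r -> 'I_p) : injective f ->
  exists (s : {perm 'I_r}) (h : 'I_r -> 'I_p), strictly_incr h /\ f =1 h \o s.
Proof.
move=> f_inj.
have rank_lt a : (#|[set b | (f b < f a)%N]| < r)%N.
  rewrite -[X in (_ < X)%N]card_ord -cardsT; apply: proper_card.
  rewrite properEneq subsetT andbT; apply: contraTneq isT => e.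
  by have := in_setT a; rewrite -e inE ltnn.
pose rk a := Ordinal (rank_lt a).
have rk_mono a a' : (f a < f a')%N -> (rk a < rk a')%N.
  move=> lt; apply: proper_card; rewrite properE; apply/andP; split.
    by apply/subsetP => x; rewrite !inE => /ltn_trans; apply.
  by apply/subsetPn; exists a; rewrite !inE ?lt ?ltnn.
have rk_inj : injective rk.
  move=> a a' e; apply: f_inj; apply: val_inj.
  by case: (ltngtP (f a) (f a')) => // /rk_mono; rewrite e ltnn.
exists (perm rk_inj), (f \o (perm rk_inj)^-1%g); split; last by move=> a /=; rewrite permK.
move=> a b ab /=; set x := ((perm rk_inj)^-1)%g a; set y := ((perm rk_inj)^-1)%g b.
case: (ltngtP (f x) (f y)) => // [/rk_mono | /val_inj /f_inj xy].
  by rewrite -!(permE rk_inj) /x /y !permKV => /(ltn_trans ab); rewrite ltnn.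
by move: ab; rewrite -[a](permKV (perm rk_inj)) -[b](permKV (perm rk_inj)) -/x -/y xy ltnn.
Qed.

(* p lies in the ideal generated by J in R[t]/(t^k). *)
Definition trunc_ideal (R : comNzRingType) (J : R -> Prop) k (p : {poly R}) : Prop :=
  forall l, (l < k)%N -> J p`_l.

Lemma trunc_ideal_ideal (R : comNzRingType) (J : R -> Prop) k :
  is_ideal J -> is_ideal (trunc_ideal J k).
Proof.
move=> J_ideal; have [J0 JD JM] := J_ideal; split.
- by move=> l _; rewrite coef0.
- by move=> a b Ja Jb l lk; rewrite coefD; apply: JD; [apply: Ja | apply: Jb].
- move=> a b Jb l lk; rewrite coefM; apply: ideal_sum => // j _; apply: JM; apply: Jb.
  exact: leq_ltn_trans (leq_subr _ _) lk.
Qed.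

Lemma mpoly_rmorph_id (R : comNzRingType) N (phi : {rmorphism {mpoly R[N]} -> {mpoly R[N]}}) :
  (forall c, phi c%:MP = c%:MP) -> (forall i, phi 'X_i = 'X_i) -> phi =1 id.
Proof.
move=> phiC phiX p; rewrite [in LHS](mpolyE p) rmorph_sum [in RHS](mpolyE p).
apply: eq_bigr => mu _; rewrite -!mul_mpolyC rmorphM phiC mpolyXE_id rmorph_prod.
by congr (_ * _); apply: eq_bigr => i _; rewrite rmorphXn phiX.
Qed.

Section GenericMatrix.
Variables (F : closedFieldType) (m n k : nat).
Local Notation S := (Sring F m n k).
Local Notation X := (Xt F m n k).

Lemma map_poly_sumCX (phi : {rmorphism S -> S}) (a : 'I_k -> S) :
  map_poly phi (\sum_(l < k) (a l)%:P * 'X^l) = \sum_(l < k) (phi (a l))%:P * 'X^l.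
Proof. by rewrite rmorph_sum; apply: eq_bigr => l _; rewrite rmorphM /= map_polyC map_polyXn. Qed.

Section ShiftAlong.
Variable e : 'I_m -> 'I_n -> option ('I_m * 'I_n).

Definition shift_var (v : 'I_#|{: vidx m n k}|) : {poly S} :=
  let: (i, j, l) := enum_val v in
  (xvar F i j l)%:P + (if e i j is Some (i', j') then 'X * (xvar F i' j' l)%:P else 0).

Definition shift_poly : {rmorphism S -> {poly S}} := mmap (polyC \o (@mpolyC _ F))%FUN shift_var.

Definition shift (c : F) : {rmorphism S -> S} := (horner_eval (c%:MP : S) \o shift_poly)%FUN.

Lemma shift_xvar c i j l : shift c (xvar F i j l) =
  xvar F i j l + (if e i j is Some (i', j') then c%:MP * xvar F i' j' l else 0).
Proof.
rewrite /= mmapX mmap1U /shift_var enum_rankK.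
by case: (e i j) => [[i' j']|]; rewrite horner_evalE !hornerE.
Qed.

Lemma shift0 : shift 0 =1 id.
Proof.
apply: mpoly_rmorph_id => [a|v]; first by rewrite /= mmapC horner_evalE /= hornerC.
rewrite -[v]enum_valK; case: (enum_val v) => [[i j] l]; rewrite shift_xvar.
by case: (e i j) => [[? ?]|]; rewrite ?mpolyC0 ?mul0r addr0.
Qed.

Lemma map_shift_xpoly c i j : map_poly (shift c) (xpoly F k i j) =
  xpoly F k i j + (if e i j is Some (i', j') then (c%:MP)%:P * xpoly F k i' j' else 0).
Proof.
rewrite /xpoly map_poly_sumCX.
transitivity (\sum_(l < k) (xvar F i j l +
    (if e i j is Some (i', j') then c%:MP * xvar F i' j' l else 0))%:P * 'X^l).
  by apply: eq_bigr => l _; rewrite shift_xvar.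
case: (e i j) => [[i' j']|]; last by rewrite addr0; apply: eq_bigr => l _; rewrite addr0.
rewrite big_distrr -big_split; apply: eq_bigr => l _.
by rewrite polyCD polyCM mulrDl /= mulrA.
Qed.

End ShiftAlong.

Definition row_shift (i0 i1 : 'I_m) (i : 'I_m) (j : 'I_n) :=
  if i == i1 then Some (i0, j) else None.

Definition col_shift (j0 j1 : 'I_n) (i : 'I_m) (j : 'I_n) :=
  if j == j1 then Some (i, j0) else None.

Lemma map_Xt_row_shift i0 i1 c :
  map_mx (map_poly (shift (row_shift i0 i1) c)) X = X + (c%:MP)%:P *: (delta_mx i1 i0 *m X).
Proof.
apply/matrixP => i j; rewrite add_row_mxE !mxE map_shift_xpoly /row_shift.
by case: (i == i1).
Qed.

Lemma map_Xt_col_shift j0 j1 c :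
  map_mx (map_poly (shift (col_shift j0 j1) c)) X = X + (c%:MP)%:P *: (X *m delta_mx j0 j1).
Proof.
apply/matrixP => i j; rewrite add_col_mxE !mxE map_shift_xpoly /col_shift.
by case: (j == j1).
Qed.

Variable r : nat.
Local Notation I := (@Iideal F m n r k).

Lemma Iideal_ideal : is_ideal I.
Proof. exact: ideal_gen_ideal. Qed.

Lemma minors_Xt_trunc (f : 'I_r -> 'I_m) (g : 'I_r -> 'I_n) :
  trunc_ideal I k (\det (mxsub f g X)).
Proof.
have [T0 _ TM] := trunc_ideal_ideal k Iideal_ideal.
have [f_inj|/det_mxsub_noninjl ->] := classic (injective f); last exact: T0.
have [g_inj|/det_mxsub_noninjr ->] := classic (injective g); last exact: T0.
have [s [h [h_incr fE]]] := injective_sorted f_inj.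
have [s' [h' [h'_incr gE]]] := injective_sorted g_inj.
rewrite (eq_mxsub _ _ fE gE) mxsub_comp det_mxsub_perm mulrC mulrA; apply: TM.
by move=> l lk; apply: ideal_gen_sub; exists h, h', l.
Qed.

Lemma shift_Iideal e c :
  (forall (f : 'I_r -> 'I_m) g,
     trunc_ideal I k (\det (mxsub f g (map_mx (map_poly (shift e c)) X)))) ->
  forall p, I p -> I (shift e c p).
Proof.
move=> minorsI; apply: ideal_gen_rmorph => _ [f [g [l [_ _ lk ->]]]].
by rewrite -coef_map -det_map_mx map_mxsub; apply: minorsI.
Qed.

Lemma row_shift_Iideal i0 i1 c p : I p -> I (shift (row_shift i0 i1) c p).
Proof.
apply: shift_Iideal => f g; rewrite map_Xt_row_shift.
by apply: minors_add_row; [apply: trunc_ideal_ideal; apply: Iideal_ideal | apply: minors_Xt_trunc].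
Qed.

Lemma col_shift_Iideal j0 j1 c p : I p -> I (shift (col_shift j0 j1) c p).
Proof.
apply: shift_Iideal => f g; rewrite map_Xt_col_shift.
by apply: minors_add_col; [apply: trunc_ideal_ideal; apply: Iideal_ideal | apply: minors_Xt_trunc].
Qed.

Lemma minimal_prime_shift e (P : S -> Prop) :
  (forall c p, I p -> I (shift e c p)) -> minimal_prime_over I P ->
  forall i j i' j' l, e i j = Some (i', j') -> P (xvar F i j l) -> P (xvar F i' j' l).
Proof.
move=> eI P_min i j i' j' l eij Px; apply: NNPP => nPy.
have [P_prime IP _] := P_min; have [[P0 PD PM] P1 Pprime] := P_prime.
have [s [N [nPs Is]]] := minimal_prime_nilpotent Iideal_ideal P_min Px.
have Pshift c : c != 0 -> P (shift_poly e s).[c%:MP].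
  move=> c0; have := IP _ (eI c _ Is); rewrite rmorphM rmorphXn shift_xvar eij.
  move/(prime_idealMXn P_prime) => [//|Pxy]; exfalso.
  have : P (c%:MP * xvar F i' j' l).
    rewrite -[_ * _](addKr (xvar F i j l)); apply: PD => //.
    by rewrite -mulN1r; apply: PM.
  move/Pprime => [/(PM (c^-1)%:MP)|//]; rewrite -rmorphM mulVf // rmorph1.
have [ds [uds szds]] := closed_field_uniq_seq F (size (shift_poly e s)).
have /andP [ds0 {}uds] := uds.
apply: nPs; rewrite -(shift0 e s) /= horner_evalE mpolyC0 horner_coef0.
apply: (ideal_coef_of_evals (cs := map (@mpolyC _ F) ds)).
- by case: P_prime.
- by rewrite map_inj_uniq //; apply: fmorph_inj.
- by rewrite size_map.
- move=> _ _ /mapP [a ads ->] /mapP [b bds ->] ab; rewrite -rmorphB; apply: rmorph_unit.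
  by rewrite unitfE subr_eq0; apply: contraNneq ab => ->.
- by move=> _ /mapP [a ads ->]; apply: Pshift; apply: contraNneq ds0 => <-.
Qed.

End GenericMatrix.

Theorem proposition2p6 (F : closedFieldType) (m n r k : nat)
  (hr : (1 <= r)%N) (hrm : (r <= m)%N) (hmn : (m <= n)%N) (hk : (0 < k)%N)
  (P : Sring F m n k -> Prop)
  (hP : minimal_prime_over (@Iideal F m n r k) P) :
  forall (i i' : 'I_m) (j j' : 'I_n),
    P (xvar F i j (Ordinal hk)) <-> P (xvar F i' j' (Ordinal hk)).
Proof.
suff move_entry i i' j j' : P (xvar F i j (Ordinal hk)) -> P (xvar F i' j' (Ordinal hk)).
  by move=> i i' j j'; split; apply: move_entry.
move=> Pij.
have Pi'j : P (xvar F i' j (Ordinal hk)).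
  apply: (minimal_prime_shift (@row_shift_Iideal F m n k r i' i) hP _ Pij).
  by rewrite /row_shift eqxx.
apply: (minimal_prime_shift (@col_shift_Iideal F m n k r j' j) hP _ Pi'j).
by rewrite /col_shift eqxx.
Qed.
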